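(* Let $\mathbf S$ be a specialization semilattice and let $\widetilde S$, its join $\vee$ and the map $K$ be as in the context. Then $(\widetilde S,\vee,K)$ is a closure semilattice, i.e. for all $x,y\in\widetilde S$: $x\le Kx$, $KKx=Kx$, and $x\le y$ implies $Kx\le Ky$.
   Context: A specialization semilattice is a triple $\mathbf S=(S,\vee,\sqsubseteq)$ where $(S,\vee)$ is a join-semilattice, with induced order $a\le b$ iff $a\vee b=b$, and $\sqsubseteq$ is a binary relation on $S$ such that for all $a,b,c,a_1\in S$: (S1) $a\le b$ implies $a\sqsubseteq b$; (S2) $a\sqsubseteq b$ and $b\sqsubseteq c$ imply $a\sqsubseteq c$; (S3) $a\sqsubseteq b$ and $a_1\sqsubseteq b$ imply $a\vee a_1\sqsubseteq b$. Write $\vee_S,\le_S,\sqsubseteq_S$ for the operations/relations of $\mathbf S$. Let $S^{<\omega}$ be the set of finite subsets of $S$. On $S\times S^{<\omega}$ define $(a,B)\precsim(c,D)$, where $D=\{d_1,\dots,d_k\}$ ($k\ge 0$), to hold iff (a1) there exist $d_1^*,\dots,d_k^*\in S$ with $d_j^*\sqsubseteq_S d_j$ for each $j\le k$ and $a\le_S c\vee_S d_1^*\vee_S\cdots\vee_S d_k^*$ (when $D=\emptyset$ this means $a\le_S c$); and (a2) for every $b\in B$ there is $d\in D$ with $b\sqsubseteq_S d$. Let $(a,B)\sim(c,D)$ iff $(a,B)\precsim(c,D)$ and $(c,D)\precsim(a,B)$; this is an equivalence relation. Let $\widetilde S$ be the set of $\sim$-classes, and $[a,B]$ the class of $(a,B)$.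 The join $[a,B]\vee[c,D]=[a\vee_S c,B\cup D]$ on $\widetilde S$ (with induced order $\le$) and the map $K[a,\{b_1,\dots,b_h\}]=[a,\{a\vee_S b_1\vee_S\cdots\vee_S b_h\}]$ are well defined. A closure semilattice is a join-semilattice with a unary operation $K$ that is extensive, idempotent and isotone. *)

From HB Require Import structures.
From mathcomp Require Import all_boot all_order.
From mathcomp Require Import finmap.
Set Implicit Arguments. Unset Strict Implicit. Unset Printing Implicit Defensive.
Import Order.TTheory.
Local Open Scope order_scope.


(* A specialization semilattice is given by a join-semilattice S
   (MathComp's joinSemilatticeType, whose order satisfies
   x <= y <-> x `|` y = y) together with a relation sp satisfying
   (S1)-(S3); these axioms are stated as hypotheses of the theorem. *)

Section Tilde.
Context {disp : Order.disp_t} {S : joinSemilatticeType disp} (sp : rel S).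

Definition rep := (S * {fset S})%type.

(* c `|` d1* `|` ... `|` dk* , with dj* = f dj *)
Definition joinmap (c : S) (f : S -> S) (D : {fset S}) : S :=
  foldr (fun d acc => Order.join (f d) acc) c (enum_fset D).

Definition precsim (x y : rep) : Prop :=
  let: (a, B) := x in let: (c, D) := y in
  (exists f : S -> S, (forall d, d \in D -> sp (f d) d) /\ a <= joinmap c f D)
  /\ (forall b, b \in B -> exists2 d, d \in D & sp b d).

Definition simeq (x y : rep) : Prop := precsim x y /\ precsim y x.

Definition tjoin (x y : rep) : rep := (Order.join x.1 y.1, fsetU x.2 y.2).

Definition tle (x y : rep) : Prop := simeq (tjoin x y) y.

Definition tK (x : rep) : rep :=
  (x.1, (fset1 (foldr (fun b acc => Order.join b acc) x.1 (enum_fset x.2)))).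

End Tilde.

From HB Require Import structures.
From mathcomp Require Import all_boot all_order.
From mathcomp Require Import finmap.
Import Order.TTheory.
Local Open Scope order_scope.

(* Write k(a, B) = a v b1 v ... v bh, so that K[a, B] = [a, {k(a, B)}].
   Each comparison in the three closure axioms has a witness that is either
   the identity choice dj* = dj or a singleton target {d}, and checking it
   comes down to one fact: (a, B) <~ (c, D) forces k(a, B) [= k(c, D).
   Indeed a is below c v d1* v ... v dk* and each b in B is [= some dj, and
   all of c, dj*, dj are [= k(c, D), so (S2) and (S3) collect them. *)

Section Joinmap.
Context {disp : Order.disp_t} {S : joinSemilatticeType disp}.
Implicit Types (c z : S) (f : S -> S) (D : {fset S}).

Lemma joinmap_le c f D z :
  joinmap c f D <= z <-> c <= z /\ (forall d, d \in D -> f d <= z).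
Proof.
suff IH (s : seq S) : foldr (fun d acc => f d `|` acc) c s <= z <->
    c <= z /\ (forall d, d \in s -> f d <= z) by exact: IH.
elim: s => [|d s IH] /=; first by split=> // -[].
rewrite leUx; split=> [/andP[fdz /IH[cz sz]]|[cz Dz]].
  by split=> // e; rewrite inE => /orP[/eqP->|/sz].
apply/andP; split; first by apply: Dz; rewrite inE eqxx.
by apply/IH; split=> // e es; apply: Dz; rewrite inE es orbT.
Qed.

Lemma le_joinmap_c c f D : c <= joinmap c f D.
Proof. by have [] := (joinmap_le c f D _).1 (lexx _). Qed.

Lemma le_joinmap_f c f {D d} : d \in D -> f d <= joinmap c f D.
Proof. by have [_] := (joinmap_le c f D _).1 (lexx _); apply. Qed.

Lemma joinmap_subset c c' f D D' :
  c <= c' -> {subset D <= D'} -> joinmap c f D <= joinmap c' f D'.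
Proof.
move=> cc' DD'; apply/joinmap_le; split; first exact: le_trans (le_joinmap_c _ _ _).
by move=> d /DD' dD'; apply: le_joinmap_f.
Qed.

Definition kjoin (x : S * {fset S}) : S := joinmap x.1 id x.2.

Lemma tKE a (B : {fset S}) : tK (a, B) = (a, [fset kjoin (a, B)]%fset).
Proof. by []. Qed.

Lemma tjoinE a c (B D : {fset S}) : tjoin (a, B) (c, D) = (a `|` c, (B `|` D)%fset).
Proof. by []. Qed.

End Joinmap.

Section Specialization.
Context {disp : Order.disp_t} {S : joinSemilatticeType disp} {sp : rel S}.
Hypothesis S1 : forall {a b : S}, a <= b -> sp a b.
Hypothesis S2 : forall {a b c : S}, sp a b -> sp b c -> sp a c.
Hypothesis S3 : forall a a1 b : S, sp a b -> sp a1 b -> sp (a `|` a1) b.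

Lemma sp_joinmap c f (D : {fset S}) z :
  sp c z -> (forall d, d \in D -> sp (f d) z) -> sp (joinmap c f D) z.
Proof.
move=> cz; suff IH (s : seq S) : (forall d, d \in s -> sp (f d) z) ->
    sp (foldr (fun d acc => f d `|` acc) c s) z by exact: IH.
elim: s => [|d s IH] //= Dz.
apply: S3; first by apply: Dz; rewrite inE eqxx.
by apply: IH => e es; apply: Dz; rewrite inE es orbT.
Qed.

Lemma precsim_of_le {a} {B : {fset S}} {c} {D : {fset S}} :
  a <= joinmap c id D -> (forall b, b \in B -> exists2 d, d \in D & sp b d) ->
  precsim sp (a, B) (c, D).
Proof. by move=> aD BD; split=> //; exists id; split=> // d _; apply: S1. Qed.

Lemma precsim_fset1 {a} {B : {fset S}} {c d e} :
  sp e d -> a <= c `|` e -> (forall b, b \in B -> sp b d) ->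
  precsim sp (a, B) (c, [fset d]%fset).
Proof.
move=> ed ace Bd; split=> [|b /Bd bd]; last by exists d; rewrite ?inE.
exists (fun=> e); split=> [d0|]; first by rewrite inE => /eqP->.
apply: le_trans ace _.
by rewrite leUx le_joinmap_c (le_joinmap_f c (fun=> e) (fset11 d)).
Qed.

Lemma precsim_sp_kjoin {x y} : precsim sp x y -> sp (kjoin x) (kjoin y).
Proof.
case: x y => [a B] [c D] [[f [fD af]] BD].
have Dy d : d \in D -> sp d (kjoin (c, D)) by move/(le_joinmap_f c id)/S1.
apply: sp_joinmap => [|b /BD [d /Dy dy bd]]; last exact: S2 bd dy.
apply: (S2 (S1 af)); apply: sp_joinmap => [|d dD]; first exact/S1/le_joinmap_c.
exact: S2 (fD d dD) (Dy d dD).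
Qed.

Lemma tle_tK x : tle sp x (tK x).
Proof.
case: x => a B; rewrite /tle /simeq tKE tjoinE joinxx.
have aB : a <= kjoin (a, B) := le_joinmap_c a id B.
split; first apply: (precsim_fset1 (S1 aB)); rewrite ?joinxx //.
  by move=> b; rewrite !inE => /orP[/(le_joinmap_f a id)|/eqP->]; apply: S1.
apply: precsim_of_le => [|b]; first exact: le_joinmap_c.
by rewrite inE => /eqP->; exists (kjoin (a, B)); [rewrite !inE eqxx orbT|exact: S1].
Qed.

Lemma tK_idem x : simeq sp (tK (tK x)) (tK x).
Proof.
case: x => a B; rewrite !tKE /simeq.
set s := kjoin (a, B); set s' := kjoin (a, [fset s]%fset).
have ss' : s <= s' := le_joinmap_f a id (fset11 s).
have s's : s' <= s.
  by apply/joinmap_le; split=> [|d]; [exact: le_joinmap_c|rewrite inE => /eqP->].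
split; apply: precsim_of_le => [|b]; rewrite ?le_joinmap_c // inE => /eqP->.
  by exists s; rewrite ?inE //; apply: S1.
by exists s'; rewrite ?inE //; apply: S1.
Qed.

Lemma tK_mono x y : tle sp x y -> tle sp (tK x) (tK y).
Proof.
case: x y => [a B] [c D]; rewrite /tle /simeq !tKE !tjoinE => -[acBD _].
set sx := kjoin (a, B); set sy := kjoin (c, D).
have acJ := precsim_sp_kjoin acBD.
have acy : sp (a `|` c) sy := S2 (S1 (le_joinmap_c _ _ _)) acJ.
have xy : sp sx sy.
  apply: S2 acJ; apply/S1/joinmap_subset; first exact: leUl.
  by move=> b; rewrite inE => ->.
split; first apply: (precsim_fset1 acy); rewrite ?leUr //.
  by move=> b; rewrite !inE => /orP[]/eqP->; [exact: xy|exact: S1].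
apply: precsim_of_le => [|b].
  exact: le_trans (leUr c a) (le_joinmap_c _ _ _).
by rewrite inE => /eqP->; exists sy; [rewrite !inE eqxx orbT|exact: S1].
Qed.

End Specialization.

Theorem claim3p7 (disp : Order.disp_t) (S : joinSemilatticeType disp)
  (sp : rel S)
  (S1 : forall a b : S, a <= b -> sp a b)
  (S2 : forall a b c : S, sp a b -> sp b c -> sp a c)
  (S3 : forall a a1 b : S, sp a b -> sp a1 b -> sp (a `|` a1) b) :
  (forall x : (S * {fset S})%type, tle sp x (tK x)) /\
  (forall x : (S * {fset S})%type, simeq sp (tK (tK x)) (tK x)) /\
  (forall x y : (S * {fset S})%type, tle sp x y -> tle sp (tK x) (tK y)).
Proof.
split; first exact: tle_tK S1.
split; first exact: tK_idem S1.
exact: tK_mono S1 S2 S3.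
Qed.
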